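(* Let $t\ge 3$, let $\mathcal{A}$ be a nontrivial clutter on $E_t=\{1,\ldots,t\}$, and let $\mathcal{B}:=\mathfrak{B}(\mathcal{A})$ be its blocker. Then $T_{\mathcal{B}^{\triangledown}}=-T_{\mathcal{A}^{\triangledown}}\cdot\overline{\mathbf{U}}(2^t)$, and: (i) $\mathfrak{q}(T_{\mathcal{B}^{\triangledown}})=\mathfrak{q}(T_{\mathcal{A}^{\triangledown}})$ and $\boldsymbol{x}(T_{\mathcal{B}^{\triangledown}})=\boldsymbol{x}(T_{\mathcal{A}^{\triangledown}})\cdot\overline{\mathbf{U}}(2^t)\cdot\overline{\mathbf{T}}(2^t)$; (ii) if the set $\{k\in\{1,\ldots,2^t\}: T_{\mathcal{A}^{\triangledown}}(k)=-1\}$ is the disjoint union of integer intervals $[i_1,j_1]\,\dot\cup\cdots\dot\cup\,[i_\varrho,j_\varrho]$ with $i_k\le j_k$ and $j_k+2\le i_{k+1}$ for $1\le k\le \varrho-1$, then $\mathfrak{q}(T_{\mathcal{B}^{\triangledown}})=\mathfrak{q}(T_{\mathcal{A}^{\triangledown}})=2\varrho-1$, $\boldsymbol{x}(T_{\mathcal{A}^{\triangledown}})=\sum_{k=1}^{\varrho-1}\boldsymbol{\sigma}(j_k+1)-\sum_{\ell=1}^{\varrho}\boldsymbol{\sigma}(i_\ell)$, and $\boldsymbol{x}(T_{\mathcal{B}^{\triangledown}})=\sum_{k=1}^{\varrho-1}\boldsymbol{\sigma}(2^t-j_k+1)-\sum_{\ell=1}^{\varrho}\boldsymbol{\sigma}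(2^t-i_\ell+2)$.
   Context: A clutter on $E_t$ is a family of subsets of $E_t$ none of which contains another; it is nontrivial if it is neither the empty family nor $\{\emptyset\}$. For a family $\mathcal{C}$, $\mathcal{C}^{\triangledown}:=\{D\subseteq E_t: D\supseteq C\text{ for some }C\in\mathcal{C}\}$. The blocker $\mathfrak{B}(\mathcal{A})$ is the family of inclusion-minimal sets meeting every member of $\mathcal{A}$. Order the $2^t$ subsets of $E_t$ by increasing cardinality, and lexicographically among subsets of equal cardinality. For a family $\mathcal{F}$ of subsets of $E_t$, $\boldsymbol{\gamma}(\mathcal{F})\in\{0,1\}^{2^t}$ has $k$-th entry $1$ iff the $k$-th subset in this order lies in $\mathcal{F}$, and the characteristic tope is $T_{\mathcal{F}}:=\mathrm{T}^{(+)}_{2^t}-2\boldsymbol{\gamma}(\mathcal{F})\in\{1,-1\}^{2^t}$, where $\mathrm{T}^{(+)}_{2^t}$ is the all-ones row vector. Let $\boldsymbol{\sigma}(e)$ be the $e$-th standard unit vector of $\mathbb{R}^{2^t}$. Define $R^0:=\mathrm{T}^{(+)}_{2^t}$ and, for $1\le s\le 2^t-1$, $R^s$ the vector with entries $-1$ in positions $1,\ldots,s$ and $1$ elsewhere (first half of a symmetric cycle $R^0,\ldots,R^{2\cdot2^t-1}$, $R^{2^t+k}=-R^k$, in the hypercube graph on $\{1,-1\}^{2^t}$). For $T\in\{1,-1\}^{2^t}$, $\boldsymbol{x}(T)$ is the unique vector (in $\{-1,0,1\}^{2^t}$) with $T=\sum_{i=1}^{2^t}x_iR^{i-1}$, and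 $\mathfrak{q}(T)$ is the number of its nonzero entries. $\overline{\mathbf{U}}(2^t)$ is the backward identity matrix ($(i,j)$ entry $\delta_{i+j,2^t+1}$) and $\overline{\mathbf{T}}(2^t)$ the forward shift matrix ($(i,j)$ entry $\delta_{j-i,1}$), both of order $2^t$. *)

From HB Require Import structures.
From mathcomp Require Import all_boot all_order all_algebra.
Set Implicit Arguments. Unset Strict Implicit. Unset Printing Implicit Defensive.
Import Order.TTheory GRing.Theory Num.Theory.
Local Open Scope ring_scope.

(* E_t is modelled by 'I_t (element m : 'I_t stands for m+1). *)

Definition clutter t (C : {set {set 'I_t}}) : Prop :=
  forall A B, A \in C -> B \in C -> A \subset B -> A = B.

Definition nontrivial_clutter t (C : {set {set 'I_t}}) : Prop :=
  clutter C /\ C != set0 /\ C != [set set0].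

Definition upclosure t (C : {set {set 'I_t}}) : {set {set 'I_t}} :=
  [set D : {set 'I_t} | [exists A in C, A \subset D]].

Definition blocker t (C : {set {set 'I_t}}) : {set {set 'I_t}} :=
  [set D : {set 'I_t} | minset (fun E : {set 'I_t} => [forall A in C, A :&: E != set0]) D].

Fixpoint lexlt (s1 s2 : seq nat) : bool :=
  match s1, s2 with
  | [::], [::] => false
  | [::], _ :: _ => true
  | _ :: _, [::] => false
  | a :: s, b :: s' => (a < b)%N || ((a == b) && lexlt s s')
  end.

Definition elems t (A : {set 'I_t}) : seq nat :=
  sort leq [seq val x | x <- enum A].

Definition subset_lt t (A B : {set 'I_t}) : bool :=
  (#|A| < #|B|)%N || ((#|A| == #|B|) && lexlt (elems A) (elems B)).

Definition subset_le t (A B : {set 'I_t}) : bool := (A == B) || subset_lt A B.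

Definition ordered_subsets t : seq {set 'I_t} :=
  sort (@subset_le t) (enum {set 'I_t}).

(* k-th subset (0-based k; the paper's k+1-th). *)
Definition kth_subset t (k : nat) : {set 'I_t} := nth set0 (ordered_subsets t) k.

(* gamma(F) and the characteristic tope T_F = 1 - 2 gamma(F), as rational
   row vectors of length 2^t (0-based index k = paper's position k+1). *)
Definition gammaF t (F : {set {set 'I_t}}) : 'rV[rat]_(2 ^ t) :=
  \row_(k < 2 ^ t) ((kth_subset t k \in F)%:R).

Definition topeF t (F : {set {set 'I_t}}) : 'rV[rat]_(2 ^ t) :=
  const_mx 1 - 2%:R *: gammaF F.

(* The vectors R^s, s = 0..n-1: entries -1 in (1-based) positions 1..s. *)
Definition Rvec n (s : nat) : 'rV[rat]_n :=
  \row_(m < n) (if (m < s)%N then -1 else 1).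

Definition Rmat n : 'M[rat]_n := \matrix_(i < n, m < n) Rvec n i 0 m.

(* x(T): the unique vector with T = sum_i x_i R^{i-1}, i.e. T = x *m Rmat. *)
Definition xvec n (T : 'rV[rat]_n) : 'rV[rat]_n := T *m invmx (Rmat n).

Definition qnum n (T : 'rV[rat]_n) : nat := #|[set i : 'I_n | xvec T 0 i != 0]|.

(* Backward identity and forward shift (1-based (i,j): i+j = n+1, j-i = 1). *)
Definition Ubar n : 'M[rat]_n := \matrix_(i < n, j < n) ((i + j == n.-1)%N)%:R.
Definition Tbar n : 'M[rat]_n := \matrix_(i < n, j < n) ((val j == i.+1)%N)%:R.

(* sigma(e): e-th (1-based) standard unit row vector. *)
Definition sigma n (e : nat) : 'rV[rat]_n := \row_(m < n) ((m.+1 == e)%N)%:R.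

From HB Require Import structures.
From mathcomp Require Import all_boot all_order all_algebra zify ring lra.
Import Order.TTheory GRing.Theory Num.Theory.
Set Implicit Arguments. Unset Strict Implicit. Unset Printing Implicit Defensive.

(* Complementation reverses the order on subsets of E_t: it reverses cardinalities,
   and for sets of equal size the least element of the symmetric difference moves
   from one set to the other.  Since D lies in the up-closure of the blocker of A
   exactly when its complement does not lie in the up-closure of A, the tope of
   B^▽ is minus the reversal of the tope of A^▽.
   Solving T = sum_i x_i R^(i-1) gives x_1 = (T_1 + T_n)/2 and
   x_m = (T_m - T_(m-1))/2, so negating and reversing T shifts and reverses x,
   because T_A(1) = 1 and T_A(2^t) = -1 (the empty set is not in A^▽, E_t is).
   When the -1 entries of T_A form separated intervals, x_m is the jump of their
   indicator at m: +1 just after each interval except the last (which ends at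
   2^t) and -1 at each left end. *)

(** * The order on subsets *)

Lemma lexltE s1 s2 : lexlt s1 s2 = ((s1 : seqlexi nat) < s2)%O.
Proof.
elim: s1 s2 => [|a s1 IH] [|b s2] /=; rewrite ?ltxx ?ltxi0s ?ltxis0 //.
by rewrite ltxi_cons IH !leEnat; case: ltngtP.
Qed.

Lemma lexlt_sortedP s1 s2 : sorted ltn s1 -> sorted ltn s2 -> size s1 = size s2 ->
  reflect (exists m, [/\ m \in s1, m \notin s2 & forall x, x < m -> (x \in s1) = (x \in s2)])
          (lexlt s1 s2).
Proof.
elim: s1 s2 => [|a s1 IH] [|b s2] //=; first by move=> *; right; case=> m [].
move=> p1 p2 [sz]; have S1 := path_sorted p1; have S2 := path_sorted p2.
have out1 x : x <= a -> (x \in s1) = false.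
  by move=> xa; apply/negP => /(allP (order_path_min ltn_trans p1)) /=; lia.
have out2 x : x <= b -> (x \in s2) = false.
  by move=> xb; apply/negP => /(allP (order_path_min ltn_trans p2)) /=; lia.
have [ab|ba|eab] /= := ltngtP a b; last subst b.
- left; exists a; rewrite !inE eqxx out2 ?(ltnW ab) // orbF; split=> //; first by lia.
  by move=> x xa; rewrite !inE out1 ?out2 ?orbF; [apply/eqP/eqP | |]; lia.
- right=> -[m [m1 m2 agree]].
  have am : a <= m by move: m1; rewrite inE => /predU1P[->//|]; case: leqP => // /ltnW/out1 ->.
  by move: (agree b); rewrite !inE eqxx out1 ?(ltnW ba) // orbF; case: eqP => //; lia.
- rewrite ?ltnn ?eqxx /=; apply: (iffP (IH s2 S1 S2 sz)) => -[m [m1 m2 agree]].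
    have am : a != m by apply: contraTneq m1 => <-; rewrite out1.
    exists m; rewrite !inE m1 orbT eq_sym (negbTE am) m2; split=> // x /agree.
    by rewrite !inE => ->.
  have ma : m != a by apply: contra m2 => /eqP->; rewrite inE eqxx.
  move: m1 m2; rewrite !inE (negbTE ma) /= => m1 m2; exists m; split=> // x xm.
  have [->|xa] := eqVneq x a; first by rewrite out1 ?out2.
  by move: (agree x xm); rewrite !inE (negbTE xa).
Qed.

Section SubsetOrder.
Variable t : nat.
Implicit Types A B : {set 'I_t}.

Lemma elems_sorted A : sorted ltn (elems A).
Proof.
rewrite ltn_sorted_uniq_leq sort_uniq sort_sorted ?andbT; last exact: leq_total.
by rewrite (map_inj_uniq val_inj) enum_uniq.
Qed.

Lemma size_elems A : size (elems A) = #|A|.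
Proof. by rewrite size_sort size_map -cardE. Qed.

Lemma mem_elems A x : (x \in elems A) = [exists m in A, val m == x].
Proof.
rewrite mem_sort; apply/mapP/existsP => [[m]|[m /andP[mA /eqP <-]]].
  by rewrite mem_enum => mA ->; exists m; rewrite mA eqxx.
by exists m; rewrite ?mem_enum.
Qed.

Lemma mem_elems_ord A (m : 'I_t) : (val m \in elems A) = (m \in A).
Proof.
rewrite mem_elems; apply/existsP/idP => [[k /andP[kA /eqP/val_inj <-]]//|mA].
by exists m; rewrite mA eqxx.
Qed.

Lemma elems_inj : injective (@elems t).
Proof. by move=> A B eqAB; apply/setP => m; rewrite -!mem_elems_ord eqAB. Qed.

Lemma lexlt_elemsP A B : #|A| = #|B| ->
  reflect (exists m, [/\ m \in A, m \notin B & forall x : 'I_t, x < m -> (x \in A) = (x \in B)])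
          (lexlt (elems A) (elems B)).
Proof.
move=> cardAB; have sizeAB : size (elems A) = size (elems B) by rewrite !size_elems.
apply: (iffP (lexlt_sortedP (elems_sorted A) (elems_sorted B) sizeAB)).
- case=> m [mA mB agree]; move: (mA); rewrite mem_elems => /existsP[k /andP[_ /eqP km]].
  exists k; rewrite -!mem_elems_ord km; split=> // x xk.
  by rewrite -!mem_elems_ord agree // -km.
- case=> m [mA mB agree]; exists (val m); rewrite !mem_elems_ord; split=> // x xm.
  case: (ltnP x t) => [xt|tx]; first by rewrite -[x]/(val (Ordinal xt)) !mem_elems_ord agree.
  apply/idP/idP; rewrite mem_elems => /existsP[k /andP[_ /eqP kx]].
  all: by move: tx; rewrite -kx leqNgt ltn_ord.
Qed.

Definition subset_key A : nat *l seqlexi nat := (#|A|, elems A).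

Lemma subset_key_inj : injective subset_key.
Proof. by move=> A B [_ /elems_inj]. Qed.

Lemma subset_leE A B : subset_le A B = (subset_key A <= subset_key B)%O.
Proof.
rewrite le_eqVlt (inj_eq subset_key_inj) /subset_le /subset_lt ltxi_pair lexltE !leEnat.
by case: ltngtP.
Qed.

Lemma subset_le_total : total (@subset_le t).
Proof. by move=> A B; rewrite !subset_leE le_total. Qed.

Lemma subset_le_trans : transitive (@subset_le t).
Proof. by move=> B A C; rewrite !subset_leE; apply: le_trans. Qed.

Lemma subset_le_anti : antisymmetric (@subset_le t).
Proof. by move=> A B; rewrite !subset_leE => /le_anti; apply: subset_key_inj. Qed.

Lemma subset_leC A B : subset_le A B -> subset_le (~: B) (~: A).
Proof.
have cardC (X : {set 'I_t}) : #|~: X| = t - #|X| by rewrite [LHS]cardsCs setCK card_ord.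
have cardX (X : {set 'I_t}) : #|X| <= t by have := max_card X; rewrite card_ord.
rewrite /subset_le /subset_lt !cardC; case/orP=> [/eqP->|]; first by rewrite eqxx.
case/orP=> [ltAB|/andP[/eqP cardAB /lexlt_elemsP]]; first by move: (cardX A) (cardX B); lia.
case/(_ cardAB)=> m [mA mB agree]; rewrite cardAB eqxx ltnn /=; apply/orP; right.
apply/lexlt_elemsP; first by rewrite !cardC cardAB.
by exists m; rewrite !inE mA mB; split=> // x /agree; rewrite !inE => ->.
Qed.

Lemma subset_le0 A : subset_le set0 A.
Proof. by rewrite /subset_le /subset_lt cards0 card_gt0 eq_sym; case: eqP. Qed.

Lemma ordered_subsets_sorted : sorted (@subset_le t) (ordered_subsets t).
Proof. exact: sort_sorted subset_le_total _. Qed.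

Lemma mem_ordered_subsets A : A \in ordered_subsets t.
Proof. by rewrite mem_sort mem_enum. Qed.

Lemma ordered_subsets_uniq : uniq (ordered_subsets t).
Proof. by rewrite sort_uniq enum_uniq. Qed.

Lemma size_ordered_subsets : size (ordered_subsets t) = 2 ^ t.
Proof.
rewrite size_sort -cardE; have := card_powerset [set: 'I_t]; rewrite cardsT card_ord => <-.
by apply: eq_card => X; rewrite !inE subsetT.
Qed.

Lemma ordered_subsetsC : ordered_subsets t = rev (map (@setC _) (ordered_subsets t)).
Proof.
apply: (sorted_eq subset_le_trans subset_le_anti ordered_subsets_sorted).
  rewrite rev_sorted sorted_map.
  by apply: sub_sorted ordered_subsets_sorted => X Y /subset_leC.
rewrite perm_sym perm_rev; apply: uniq_perm => [||X].
- by rewrite (map_inj_uniq (@setC_inj _)) ordered_subsets_uniq.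
- exact: ordered_subsets_uniq.
- by rewrite mem_ordered_subsets -(setCK X) map_f ?mem_ordered_subsets.
Qed.

Lemma kth_subsetC k : k < 2 ^ t -> kth_subset t (2 ^ t - k.+1) = ~: kth_subset t k.
Proof.
move=> kt; rewrite /kth_subset {1}ordered_subsetsC nth_rev size_map size_ordered_subsets;
  last by lia.
by rewrite (nth_map set0) ?size_ordered_subsets // (_ : _ - _ = k) //; lia.
Qed.

Lemma kth_subset0 : kth_subset t 0 = set0.
Proof.
have refl : reflexive (@subset_le t) by move=> A; rewrite subset_leE.
apply: subset_le_anti; rewrite subset_le0 andbT /kth_subset.
have set0_in := mem_ordered_subsets set0; rewrite -{2}(nth_index set0 set0_in).
apply: (sorted_leq_nth subset_le_trans refl _ ordered_subsets_sorted) => //.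
- by rewrite inE size_ordered_subsets expn_gt0.
- by rewrite inE index_mem.
Qed.

Lemma kth_subset_last : kth_subset t (2 ^ t).-1 = setT.
Proof. by rewrite -subn1 kth_subsetC ?expn_gt0 // kth_subset0 setC0. Qed.
End SubsetOrder.

Local Open Scope ring_scope.

(** * Reversal and shift *)

Lemma rev_ordE n (i : 'I_n) : rev_ord i = (n - i.+1)%N :> nat.
Proof. by []. Qed.

Lemma ord_predE n (i : 'I_n) : ord_pred i = (if i == 0 :> nat then n.-1 else i.-1) :> nat.
Proof.
have i_lt := ltn_ord i; rewrite /=; case: eqP => [->|/eqP i_neq0].
  by rewrite add0n modn_small // prednK //; lia.
by rewrite (_ : (i + n).-1 = i.-1 + n)%N ?modnDr ?modn_small //; lia.
Qed.

Lemma ord_pred0 n (k : 'I_n) : k = 0 :> nat -> ord_pred k = rev_ord k.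
Proof. by move=> k0; apply: ord_inj; rewrite ord_predE rev_ordE k0 subn1. Qed.

Lemma mulmx_Ubar n (v : 'rV[rat]_n) k : (v *m Ubar n) 0 k = v 0 (rev_ord k).
Proof.
rewrite mxE (bigD1 (rev_ord k)) //= big1 => [|m mk]; rewrite mxE.
  rewrite (_ : _ + _ == _)%N ?mulr1 ?addr0 //; apply/eqP => /=.
  by move: (ltn_ord k); lia.
case: eqP => [km|]; rewrite ?mulr0 //; case/eqP: mk; apply/val_inj => /=.
by move: (ltn_ord k); lia.
Qed.

Lemma mulmx_Tbar n (v : 'rV[rat]_n) k :
  (v *m Tbar n) 0 k = if k == 0 :> nat then 0 else v 0 (ord_pred k).
Proof.
rewrite mxE; under eq_bigr => m _ do rewrite mxE /=.
case: eqP => [->|/eqP k_neq0]; first by rewrite big1 // => m _; rewrite mulr0.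
rewrite (bigD1 (ord_pred k)) // big1 => [|m mk].
  by rewrite ord_predE (negbTE k_neq0) prednK ?lt0n // eqxx mulr1 /= addr0.
have [km|_] := eqVneq (k : nat) m.+1; rewrite ?mulr0 //; case/eqP: mk; apply: ord_inj.
by rewrite ord_predE (negbTE k_neq0) km.
Qed.

Lemma mulmx_UbarTbar n (v : 'rV[rat]_n) k :
  (v *m Ubar n *m Tbar n) 0 k = if k == 0 :> nat then 0 else v 0 (rev_ord (ord_pred k)).
Proof. by rewrite mulmx_Tbar mulmx_Ubar. Qed.

Lemma rev_ord_predK n : involutive (fun k : 'I_n => rev_ord (ord_pred k)).
Proof.
move=> k; apply: ord_inj; have k_lt := ltn_ord k.
by rewrite !(rev_ordE, ord_predE); do 2![case: ifP => /eqP]; lia.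
Qed.

Lemma card_support_UbarTbar n (v : 'rV[rat]_n) :
  (forall k : 'I_n, k = 0 :> nat -> v 0 k = 0) ->
  #|[set m | (v *m Ubar n *m Tbar n) 0 m != 0]| = #|[set m | v 0 m != 0]|.
Proof.
move=> v0; have entryE m : (v *m Ubar n *m Tbar n) 0 m = v 0 (rev_ord (ord_pred m)).
  by rewrite mulmx_UbarTbar; case: (m =P 0 :> nat) => // m0; rewrite ord_pred0 // rev_ordK v0.
rewrite -[RHS](card_preimset _ (inv_inj (@rev_ord_predK n))); apply: eq_card => m.
by rewrite !inE entryE.
Qed.

(** * Coordinates along the cycle R *)

(* Entry [m] of [R^i] is [-1] exactly when [m < i], so [T = x *m Rmat n] gives
   [T_m - T_(m-1) = 2 x_m] and [T_0 + T_(n-1) = 2 x_0]. *)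
Definition xcoord n (T : 'rV[rat]_n) : 'rV[rat]_n :=
  \row_(m < n) ((if m == 0 :> nat then T 0 m + T 0 (ord_pred m)
                 else T 0 m - T 0 (ord_pred m)) / 2).

Lemma xcoordK n (T : 'rV[rat]_n) : xcoord T *m Rmat n = T.
Proof.
case: n T => [|n] T; first by apply/rowP => -[].
apply/rowP => m; pose g k := T 0 (inord k).
have gE (k : 'I_n.+1) : T 0 k = g k by rewrite /g inord_val.
rewrite mxE big_ord_recl !mxE /= gE (gE (ord_pred _)) ord_predE /= mulr1.
under eq_bigr => k _ do rewrite !mxE /= gE (gE (ord_pred _)) ord_predE /= /bump add1n add0n.
rewrite -(big_mkord xpredT (fun k => (g k.+1 - g k) / 2 * (if (m < k.+1)%N then -1 else 1))).
have m_le : (m <= n)%N by rewrite -ltnS.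
rewrite (big_cat_nat (leq0n m) m_le) /=.
rewrite (eq_big_nat _ _ (F2 := fun k => (g k.+1 - g k) / 2)) => [|k /andP[_ km]]; last first.
  by rewrite ltnS leqNgt km mulr1.
rewrite [\sum_(m <= k < n) _](eq_big_nat _ _ (F2 := fun k => - ((g k.+1 - g k) / 2)));
  last by move=> k /andP[mk _]; rewrite ltnS mk mulrN1.
rewrite sumrN -!big_distrl !telescope_sumr // gE /=; lra.
Qed.

Lemma Rmat_unit n : Rmat n \in unitmx.
Proof.
case: n => [|n]; first by rewrite unitmxE det_mx00 unitr1.
pose X := \matrix_(r < n.+1) xcoord (delta_mx (0 : 'I_1) r).
have /mulmx1_unit[] // : X *m Rmat n.+1 = 1%:M.
by apply/row_matrixP => r; rewrite row_mul rowK xcoordK row1.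
Qed.

Lemma xvecE n (T : 'rV[rat]_n) : xvec T = xcoord T.
Proof. by rewrite /xvec -{1}(xcoordK T) mulmxK ?Rmat_unit. Qed.

Lemma xcoord_oppUbar n (T : 'rV[rat]_n) :
  (forall k : 'I_n, k = 0 :> nat -> T 0 k + T 0 (rev_ord k) = 0) ->
  xcoord (- (T *m Ubar n)) = xcoord T *m Ubar n *m Tbar n.
Proof.
move=> antipodal; apply/rowP => m.
have oppUbarE k : (- (T *m Ubar n)) 0 k = - T 0 (rev_ord k) by rewrite mxE mulmx_Ubar.
have m_lt := ltn_ord m.
rewrite mulmx_UbarTbar [LHS]mxE !oppUbarE; case: (m =P 0 :> nat) => [m0|/eqP m_neq0].
  by rewrite ord_pred0 // rev_ordK -opprD addrC antipodal // oppr0 mul0r.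
rewrite mxE ifN; last by apply/eqP; rewrite rev_ordE ord_predE (negbTE m_neq0); lia.
have -> : ord_pred (rev_ord (ord_pred m)) = rev_ord m.
  by apply: ord_inj; rewrite !(rev_ordE, ord_predE) (negbTE m_neq0); case: ifP => /eqP; lia.
lra.
Qed.

Lemma qnum_oppUbar n (T : 'rV[rat]_n) :
  (forall k : 'I_n, k = 0 :> nat -> T 0 k + T 0 (rev_ord k) = 0) ->
  qnum (- (T *m Ubar n)) = qnum T.
Proof.
move=> antipodal; rewrite /qnum !xvecE xcoord_oppUbar // card_support_UbarTbar // => k k0.
by rewrite mxE k0 /= ord_pred0 // antipodal // mul0r.
Qed.

(** * Topes of up-closures *)

Lemma mem_upclosure_blocker t (A : {set {set 'I_t}}) D :
  (D \in upclosure (blocker A)) = ((~: D) \notin upclosure A).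
Proof.
pose meets_all E := [forall X in A, X :&: E != set0].
have -> : (D \in upclosure (blocker A)) = meets_all D.
  rewrite inE; apply/existsP/idP => [[E /andP[]]|meetsD].
    rewrite inE => /minsetP[/forallP meetsE _] ED; apply/forallP => X.
    apply/implyP => XA; apply: contraNneq (implyP (meetsE X) XA) => XD.
    by rewrite -subset0 -XD setIS.
  have [E minE ED] := minset_exists meetsD.
  by exists E; rewrite inE minE.
rewrite inE negb_exists; apply: eq_forallb => X.
by rewrite setI_eq0 disjoints_subset negb_and implybE.
Qed.

Lemma topeE t (F : {set {set 'I_t}}) (k : 'I_(2 ^ t)) :
  topeF F 0 k = 1 - 2 * (kth_subset t k \in F)%:R.
Proof. by rewrite !mxE. Qed.

Lemma tope_sign t (F : {set {set 'I_t}}) k : topeF F 0 k = 1 \/ topeF F 0 k = -1.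
Proof. by rewrite topeE; case: (_ \in _); [right | left]; rewrite /=; lra. Qed.

Lemma topeF_blocker t (A : {set {set 'I_t}}) :
  topeF (upclosure (blocker A)) = - (topeF (upclosure A) *m Ubar (2 ^ t)).
Proof.
apply/rowP => k; rewrite [RHS]mxE mulmx_Ubar !topeE mem_upclosure_blocker.
have -> : ~: kth_subset t k = kth_subset t (rev_ord k) by rewrite rev_ordE kth_subsetC.
by case: (_ \in _); rewrite /=; lra.
Qed.

Section NontrivialClutter.
Variables (t : nat) (A : {set {set 'I_t}}).
Hypothesis A_nontrivial : nontrivial_clutter A.

Lemma set0_notin_upclosure : set0 \notin upclosure A.
Proof.
have [A_clutter [_ A_neq1]] := A_nontrivial.
rewrite inE; apply/existsP => -[X /andP[XA]]; rewrite subset0 => /eqP X0; subst X.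
case/eqP: A_neq1; apply/setP => Y; rewrite inE; apply/idP/eqP => [YA|->] //.
by rewrite (A_clutter _ _ XA YA (sub0set Y)).
Qed.

Lemma setT_in_upclosure : setT \in upclosure A.
Proof.
have [_ [/set0Pn[X XA] _]] := A_nontrivial.
by rewrite inE; apply/existsP; exists X; rewrite XA subsetT.
Qed.

Lemma tope_upclosure_first (k : 'I_(2 ^ t)) : k = 0 :> nat -> topeF (upclosure A) 0 k = 1.
Proof. by move=> k0; rewrite topeE k0 kth_subset0 (negbTE set0_notin_upclosure) /=; lra. Qed.

Lemma tope_upclosure_last (k : 'I_(2 ^ t)) : k = (2 ^ t).-1 :> nat -> topeF (upclosure A) 0 k = -1.
Proof. by move=> k_last; rewrite topeE k_last kth_subset_last setT_in_upclosure /=; lra. Qed.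

Lemma tope_upclosure_antipodal (k : 'I_(2 ^ t)) :
  k = 0 :> nat -> topeF (upclosure A) 0 k + topeF (upclosure A) 0 (rev_ord k) = 0.
Proof.
move=> k0; rewrite tope_upclosure_first // tope_upclosure_last ?addrN //.
by rewrite rev_ordE k0 subn1.
Qed.
End NontrivialClutter.

(** * Separated intervals *)

Lemma sum_sigmaE n (s : seq nat) (m : 'I_n) :
  uniq s -> (\sum_(e <- s) sigma n e) 0 m = (m.+1 \in s)%:R.
Proof.
move=> s_uniq; rewrite summxE; under eq_bigr => e _ do rewrite mxE.
rewrite -natr_sum -(count_uniq_mem _ s_uniq) -sum1_count [in RHS]big_mkcond /=.
by congr (_%:R); apply: eq_bigr => e _; rewrite eq_sym; case: (_ == _).
Qed.

Lemma card_mem_succ n (s : seq nat) :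
  uniq s -> all (fun e => 0 < e <= n)%N s -> #|[set m : 'I_n | m.+1 \in s]| = size s.
Proof.
move=> s_uniq /allP s_range.
have perm_s : perm_eq [seq e <- iota 1 n | e \in s] s.
  apply: uniq_perm; rewrite ?filter_uniq ?iota_uniq // => e.
  rewrite mem_filter mem_iota andb_idr // => /s_range /andP[]; lia.
rewrite -(perm_size perm_s) size_filter -sum1_card.
rewrite -sum1_count big_mkcond /= (iotaDl 1 0) big_map.
rewrite (_ : iota 0 n = index_iota 0 n) ?big_mkord; last by rewrite /index_iota subn0.
by rewrite [RHS]big_mkcond; apply: eq_bigr => m _; rewrite inE.
Qed.

Lemma sigma_UbarTbar n e :
  (2 <= e <= n)%N -> sigma n e *m Ubar n *m Tbar n = sigma n (n + 2 - e).
Proof.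
move=> e_range; apply/rowP => m; rewrite mulmx_UbarTbar !mxE rev_ordE ord_predE.
have m_lt := ltn_ord m; case: (m =P 0 :> nat) => [m0|m_neq0].
  by rewrite m0 (_ : (1 == n + 2 - e)%N = false) //; apply/eqP; lia.
by congr (_%:R); apply/eqP/eqP; lia.
Qed.

Lemma ivl_indicator_pred a b p : (0 < a <= b)%N ->
  ((a <= p.-1 <= b)%N%:R - (a <= p <= b)%N%:R : rat) = (p == b.+1)%:R - (p == a)%:R.
Proof.
move=> ab; have : ((a <= p.-1 <= b) + (p == a) = (a <= p <= b) + (p == b.+1))%N.
  by lia.
move/(congr1 (fun k => k%:R : rat)); rewrite !natrD; lra.
Qed.

Section SeparatedIntervals.
Variables (n rho : nat) (i j : nat -> nat).
Hypothesis ivl_bounds :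
  forall k, (1 <= k <= rho)%N -> (1 <= i k)%N /\ (i k <= j k)%N /\ (j k <= n)%N.
Hypothesis ivl_sep : forall k, (1 <= k <= rho.-1)%N -> (j k + 2 <= i k.+1)%N.

Lemma ivl_sep_lt k l : (1 <= k)%N -> (k < l <= rho)%N -> (j k + 2 <= i l)%N.
Proof.
move=> k_ge1 /andP[]; elim: l => // l IH; rewrite ltnS leq_eqVlt => /predU1P[<-|kl] l_le.
  by apply: ivl_sep; lia.
have := IH kl (ltnW l_le); have := ivl_bounds (k := l); have := ivl_sep (k := l); lia.
Qed.

Definition ivl_cover p := (\sum_(1 <= l < rho.+1) (i l <= p <= j l))%N.

Lemma ivl_coverE p : ivl_cover p = has (fun l => i l <= p <= j l)%N (index_iota 1 rho.+1).
Proof.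
have [/hasP[l l_in p_in]|/hasPn p_out] := boolP (has _ _); last first.
  by rewrite /ivl_cover big_seq big1 // => l /p_out /negbTE ->.
rewrite /ivl_cover (bigD1_seq l) ?iota_uniq //= p_in big1_seq // => l' /andP[l'_neq l'_in].
move: l_in l'_in p_in; rewrite !mem_index_iota => l_in l'_in p_in.
suff -> : (i l' <= p <= j l')%N = false by [].
apply/negbTE; case: (ltngtP l l') l'_neq => // [ll'|l'l] _.
- by have := ivl_sep_lt (k := l) (l := l'); have := ivl_bounds (k := l); lia.
- by have := ivl_sep_lt (k := l') (l := l); have := ivl_bounds (k := l'); lia.
Qed.

Lemma ivl_cover_pred_sub p : ((ivl_cover p.-1)%:R - (ivl_cover p)%:R : rat) =
  \sum_(1 <= l < rho.+1) ((p == j l + 1)%N%:R - (p == i l)%:R).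
Proof.
rewrite /ivl_cover !natr_sum -sumrB; apply: eq_big_nat => l l_in.
by rewrite ivl_indicator_pred ?addn1 //; have := ivl_bounds l_in; lia.
Qed.

Variable T : 'rV[rat]_n.
Hypothesis n_gt0 : (0 < n)%N.
Hypothesis T_sign : forall k, T 0 k = 1 \/ T 0 k = -1.
Hypothesis T_neg :
  forall k : 'I_n, T 0 k = -1 <-> exists l, (1 <= l <= rho)%N /\ (i l <= k.+1 <= j l)%N.
Hypothesis T_last : forall k : 'I_n, k = n.-1 :> nat -> T 0 k = -1.

Lemma tope_ivl_coverE k : T 0 k = 1 - 2 * (ivl_cover k.+1)%:R.
Proof.
rewrite ivl_coverE; case: hasP => [[l l_in k_in]|k_out].
  rewrite (T_neg k).2 /=; first lra.
  by exists l; move: l_in; rewrite mem_index_iota ltnS.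
case: (T_sign k) => [->|/T_neg[l [l_in k_in]]]; first by rewrite subr0.
by case: k_out; exists l; rewrite ?mem_index_iota ?ltnS.
Qed.

Lemma last_interval : (0 < rho)%N /\ j rho = n.
Proof.
have last_lt : (n.-1 < n)%N by rewrite ltn_predL.
have [l [l_in]] := (T_neg (Ordinal last_lt)).1 (@T_last (Ordinal last_lt) erefl).
rewrite /= prednK // => n_in; have := ivl_bounds l_in.
have [l_lt|l_ge] := ltnP l rho; last by have -> : rho = l; lia.
by have := ivl_sep_lt (k := l) (l := rho); have := ivl_bounds (k := rho); lia.
Qed.

Lemma xcoord_ivl_cover (m : 'I_n) : xcoord T 0 m = (ivl_cover m)%:R - (ivl_cover m.+1)%:R.
Proof.
have ivl_cover0 : ivl_cover 0 = 0%N.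
  by rewrite /ivl_cover big_nat_cond big1 // => l /andP[l_in _]; have := ivl_bounds (k := l); lia.
rewrite mxE; case: (m =P 0 :> nat) => [m0|/eqP m_neq0].
  rewrite (@T_last (ord_pred m)) ?ord_predE ?m0 // tope_ivl_coverE m0 ivl_cover0; lra.
by rewrite !tope_ivl_coverE ord_predE (negbTE m_neq0) prednK ?lt0n //; lra.
Qed.

Lemma xcoord_tope_intervals :
  xcoord T = \sum_(1 <= k < rho) sigma n (j k + 1) - \sum_(1 <= l < rho.+1) sigma n (i l).
Proof.
have [rho_gt0 j_rho] := last_interval.
apply/rowP => m; rewrite xcoord_ivl_cover (ivl_cover_pred_sub m.+1).
rewrite sumrB big_nat_recr //= j_rho (_ : (m.+1 == n + 1)%N = false); last first.
  by apply/eqP; move: (ltn_ord m); lia.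
by rewrite addr0 !mxE !summxE; congr (_ - _); apply: eq_bigr => k _; rewrite mxE.
Qed.

Let ivl_stops := [seq j k + 1 | k <- index_iota 1 rho]%N.
Let ivl_starts := [seq i l | l <- index_iota 1 rho.+1].

Lemma ivl_ends_uniq : uniq (ivl_stops ++ ivl_starts).
Proof.
have sep k l := ivl_sep_lt (k := k) (l := l); have bnd k := ivl_bounds (k := k).
rewrite cat_uniq !map_inj_in_uniq ?iota_uniq ?andbT //=; last 2 first.
- move=> k l; rewrite !mem_index_iota => k_in l_in.
  by have := sep k l; have := sep l k; have := bnd k; have := bnd l; lia.
- move=> k l; rewrite !mem_index_iota => k_in l_in.
  by have := sep k l; have := sep l k; have := bnd k; have := bnd l; lia.
apply/hasPn => _ /mapP[l l_in ->]; apply/mapP => -[k k_in il].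
have {}il : i l = (j k + 1)%N := il; move: l_in k_in; rewrite !mem_index_iota => l_in k_in.
move: il; have := sep k l; have := sep l k; have := bnd k; have := bnd l.
by case: (ltngtP k l) => [kl|lk|<-]; lia.
Qed.

Lemma ivl_ends_range : all (fun e => 0 < e <= n)%N (ivl_stops ++ ivl_starts).
Proof.
rewrite all_cat; apply/andP; split; apply/allP => e /mapP[k + ->];
  rewrite mem_index_iota => k_in; have := ivl_bounds (k := k).
  by have := ivl_sep_lt (k := k) (l := rho); have := ivl_bounds (k := rho); lia.
by lia.
Qed.

Lemma qnum_tope_intervals : qnum T = (2 * rho - 1)%N.
Proof.
have := ivl_ends_uniq; rewrite cat_uniq => /and3P[stops_uniq /hasPn disjoint starts_uniq].
rewrite /qnum xvecE xcoord_tope_intervals.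
rewrite -(big_map (fun k => j k + 1)%N xpredT (sigma n)) -(big_map i xpredT (sigma n)).
rewrite -/ivl_stops -/ivl_starts.
rewrite (eq_card (B := [set m : 'I_n | m.+1 \in ivl_stops ++ ivl_starts])) => [|m].
  rewrite card_mem_succ ?ivl_ends_uniq ?ivl_ends_range // size_cat !size_map !size_iota.
  lia.
rewrite !inE !mxE !sum_sigmaE // mem_cat.
by case: (boolP (m.+1 \in ivl_starts)) => [/disjoint/negbTE->|_]; case: (m.+1 \in ivl_stops).
Qed.

Hypothesis T_first : forall k : 'I_n, k = 0 :> nat -> T 0 k = 1.

Lemma ivl_starts_ge2 l : (1 <= l <= rho)%N -> (2 <= i l)%N.
Proof.
move=> l_in; have := @T_first (Ordinal n_gt0) erefl.
rewrite tope_ivl_coverE ivl_coverE; case: hasP => [_ /=|no_cover _]; first lra.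
case: leqP => // il_le1; case: no_cover; exists l; rewrite ?mem_index_iota.
  by rewrite ltnS.
by rewrite /=; have := ivl_bounds l_in; lia.
Qed.

Lemma xcoord_tope_intervals_UbarTbar :
  xcoord T *m Ubar n *m Tbar n = \sum_(1 <= k < rho) sigma n (n - j k + 1)
                                 - \sum_(1 <= l < rho.+1) sigma n (n - i l + 2).
Proof.
rewrite xcoord_tope_intervals !mulmxBl !mulmx_suml.
congr (_ - _); apply: eq_big_nat => k k_in; rewrite sigma_UbarTbar.
- by congr sigma; have := ivl_bounds (k := k); lia.
- have := ivl_sep_lt (k := k) (l := rho); have := ivl_bounds (k := k).
  by have := ivl_bounds (k := rho); lia.
- by congr sigma; have := ivl_bounds (k := k); lia.
- by have := ivl_starts_ge2 (l := k); have := ivl_bounds (k := k); lia.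
Qed.
End SeparatedIntervals.

Theorem theorem6p3 (t : nat) (A : {set {set 'I_t}}) :
  (3 <= t)%N -> nontrivial_clutter A ->
  let B := blocker A in
  let TA := topeF (upclosure A) in
  let TB := topeF (upclosure B) in
  TB = - (TA *m Ubar (2 ^ t))
  /\ (qnum TB = qnum TA /\ xvec TB = xvec TA *m Ubar (2 ^ t) *m Tbar (2 ^ t))
  /\ (forall (rho : nat) (i j : nat -> nat),
        (forall k, (1 <= k <= rho)%N -> (1 <= i k)%N /\ (i k <= j k)%N /\ (j k <= 2 ^ t)%N) ->
        (forall k, (1 <= k <= rho.-1)%N -> (j k + 2 <= i k.+1)%N) ->
        (forall k : 'I_(2 ^ t),
            TA 0 k = -1 <-> exists l, (1 <= l <= rho)%N /\ (i l <= k.+1 <= j l)%N) ->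
        qnum TB = qnum TA /\ qnum TA = (2 * rho - 1)%N
        /\ xvec TA = \sum_(1 <= k < rho) sigma (2 ^ t) (j k + 1)
                     - \sum_(1 <= l < rho.+1) sigma (2 ^ t) (i l)
        /\ xvec TB = \sum_(1 <= k < rho) sigma (2 ^ t) (2 ^ t - j k + 1)
                     - \sum_(1 <= l < rho.+1) sigma (2 ^ t) (2 ^ t - i l + 2)).
Proof.
move=> _ A_nontrivial B TA TB.
have TB_def : TB = - (TA *m Ubar (2 ^ t)) := topeF_blocker A.
have antipodal := tope_upclosure_antipodal A_nontrivial.
have qTB : qnum TB = qnum TA by rewrite TB_def qnum_oppUbar.
have xTB : xvec TB = xvec TA *m Ubar (2 ^ t) *m Tbar (2 ^ t).
  by rewrite TB_def !xvecE xcoord_oppUbar.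
split; [exact: TB_def | split; [exact: conj qTB xTB | move=> rho i j bounds sep TA_neg]].
have n_gt0 : (0 < 2 ^ t)%N by rewrite expn_gt0.
have TA_sign := @tope_sign t (upclosure A).
have TA_first := tope_upclosure_first A_nontrivial.
have TA_last := tope_upclosure_last A_nontrivial.
have xTA := xcoord_tope_intervals bounds sep n_gt0 TA_sign TA_neg TA_last.
have xTA' := xcoord_tope_intervals_UbarTbar bounds sep n_gt0 TA_sign TA_neg TA_last TA_first.
split; [exact: qTB | split; [exact: qnum_tope_intervals TA_sign TA_neg TA_last | split]].
- by rewrite xvecE xTA.
- by rewrite xTB xvecE xTA'.
Qed.
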